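(* Let $a\in\mathbb C$ and $n\ge 0$. Then $\{(x-a)^T : T\in\mathbb P_n\}$ is a $\mathbb C$-basis of $\mathbb C\{x\}_{\le n}$. Moreover, for every $f\in\mathbb C\{x\}_{\le n}$ and every $T\in\mathbb P_n$, the coefficient of $(x-a)^T$ in the expansion of $f$ with respect to this basis is $$\langle f,(x-a)^T\rangle=\sum_{U\in\mathbb P_n}\langle f,x^U\rangle\,(U/T)\,a^{\deg(U)-\deg(T)}.$$
   Context: Let $\mathbb P$ denote the set of finite planar reduced rooted trees (rooted trees in which the children of each vertex are linearly ordered and no vertex has exactly one child), including the empty tree $\mathbf 1$ and the one-vertex tree $|$. For $T\in\mathbb P$, $\deg(T)$ is the number of leaves ($\deg\mathbf 1=0$, $\deg|=1$) and $L(T)$ is its set of leaves; $\mathbb P_n=\{T\in\mathbb P:\deg T\le n\}$. The algebra $\mathbb C\{x\}_{\mathbb P}$ of planar polynomials is the $\mathbb C$-vector space with basis $\{x^T:T\in\mathbb P\}$, $x^{\mathbf 1}=1$, $x^{|}=x$, equipped for each $k\ge2$ with the $k$-linear operation $\omega_k$ given on basis elements by $\omega_k(x^{T_1},\dots,x^{T_k})=x^T$, where $T$ is obtained by attaching the nonempty $T_i$ (in this order) as the subtrees of the children of a new root (if exactly one $T_i$ is nonempty, $T$ is that $T_i$; if all are empty, $T=\mathbf 1$). The product is $f\cdot g=\omega_2(f,g)$. Each $x^T$ arises from $x$ by iterating these operations along the tree $T$; for $y\in\mathbb C\{x\}_{\mathbb P}$, $y^T$ denotes the result of the same iteration starting from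 $y$ (with $y^{\mathbf 1}=1$), in particular $(x-a)^T$ for $a\in\mathbb C$. $\mathbb C\{x\}_{\le n}$ is the span of $\{x^T:T\in\mathbb P_n\}$, and $\langle f,x^U\rangle$ is the coefficient of $x^U$ in $f$. For $S\in\mathbb P$ and $I\subseteq L(S)$, the contraction $S|I\in\mathbb P$ is obtained from the subtree of $S$ consisting of all vertices on paths from the root to leaves in $I$ (with induced planar order) by suppressing every vertex having exactly one child; $S|\emptyset=\mathbf 1$ and $S|I=|$ if $\#I=1$. The planar binomial coefficient is $(S/T)=\#\{I\subseteq L(S): S|I=T\}$ (so it is $0$ unless $\deg T\le \deg S$). *)

From HB Require Import structures.
From mathcomp Require Import all_boot all_algebra.

Set Implicit Arguments.
Unset Strict Implicit.
Unset Printing Implicit Defensive.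
Import GRing.Theory.
Local Open Scope ring_scope.

(** Nonempty planar rooted trees: a vertex is the (ordered) list of its
    children; a leaf is [PNode [::]]. *)
Inductive ptree := PNode of seq ptree.

Fixpoint ptree_enc (t : ptree) : GenTree.tree unit :=
  let: PNode ts := t in GenTree.Node 0 (map ptree_enc ts).
Fixpoint ptree_dec (g : GenTree.tree unit) : ptree :=
  match g with
  | GenTree.Leaf _ => PNode [::]
  | GenTree.Node _ gs => PNode (map ptree_dec gs)
  end.

Lemma ptree_encK : cancel ptree_enc ptree_dec.
Proof.
rewrite /cancel; fix IH 1; case=> ts /=; congr PNode.
elim: ts => //= t ts IHts; by rewrite IH IHts.
Qed.

HB.instance Definition _ := Countable.copy ptree (can_type ptree_encK).

Definition pleaf : ptree := PNode [::].

(** Elements of P: [None] is the empty tree 1, [Some t] a nonempty tree. *)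
Definition ptr := option ptree.

Fixpoint reduced (t : ptree) : bool :=
  let: PNode ts := t in (size ts != 1%N) && all reduced ts.
Definition preduced (T : ptr) : bool :=
  if T is Some t then reduced t else true.

Fixpoint nleaves (t : ptree) : nat :=
  let: PNode ts := t in
  if ts is [::] then 1%N else sumn (map nleaves ts).
Definition pdeg (T : ptr) : nat := if T is Some t then nleaves t else 0%N.

Definition Pn (n : nat) (T : ptr) : bool := preduced T && (pdeg T <= n)%N.

(** grafting: the tree of omega_k on basis elements *)
Definition graft (ts : seq ptr) : ptr :=
  match pmap id ts with
  | [::] => None
  | [:: t] => Some t
  | ts' => Some (PNode ts')
  end.

(** contraction S|I, where I is encoded by a bit sequence indexing the
    leaves of S in left-to-right (planar) order; returns the contracted
    tree together with the unconsumed bits. *)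
Fixpoint restr (t : ptree) (m : bitseq) : ptr * bitseq :=
  let: PNode ts := t in
  if ts is [::] then
    match m with
    | b :: m' => (if b then Some pleaf else None, m')
    | [::] => (None, [::])
    end
  else
    let fix go (us : seq ptree) (m : bitseq) : seq ptr * bitseq :=
      match us with
      | [::] => ([::], m)
      | u :: us' =>
          let: (r, m1) := restr u m in
          let: (rs, m2) := go us' m1 in (r :: rs, m2)
      end in
    let: (rs, m') := go ts m in (graft rs, m').

Definition contract (S : ptr) (m : bitseq) : ptr :=
  if S is Some s then (restr s m).1 else None.

Definition pbinom (S T : ptr) : nat :=
  #|[pred m : (pdeg S).-tuple bool | contract S m == T]|.

(** Planar polynomials, represented as formal finite linear combinations
    of basis elements x^T; equality is equality of coefficient functions. *)
Section PlanarPoly.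
Variable F : comRingType.

Definition ppoly := seq (F * ptr).

Definition pcoef (f : ppoly) (U : ptr) : F := \sum_(p <- f | p.2 == U) p.1.

Definition pscale (c : F) (f : ppoly) : ppoly := [seq (c * p.1, p.2) | p <- f].

Fixpoint combs (fs : seq ppoly) : seq (F * seq ptr) :=
  if fs is f :: fs' then
    [seq (c.1 * d.1, c.2 :: d.2) | c <- f, d <- combs fs']
  else [:: (1, [::])].

(** multilinear extension of omega_k *)
Definition pomega (fs : seq ppoly) : ppoly := [seq (d.1, graft d.2) | d <- combs fs].

Fixpoint tpow (y : ppoly) (t : ptree) : ppoly :=
  let: PNode ts := t in
  if ts is [::] then y else pomega (map (tpow y) ts).
Definition ppow (y : ppoly) (T : ptr) : ppoly :=
  if T is Some t then tpow y t else [:: (1, None)].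

Definition pxa (a : F) : ppoly := [:: (1, Some pleaf); (- a, None)].

Definition in_le (n : nat) (f : ppoly) : Prop :=
  forall U, ~~ Pn n U -> pcoef f U = 0.

Definition lincomb (s : seq ptr) (c : ptr -> F) (y : ppoly) : ppoly :=
  flatten [seq pscale (c T) (ppow y T) | T <- s].

End PlanarPoly.

(* Expanding [y^T] multilinearly along [T] gives
     [(x + c)^T = \sum_I c^(deg T - #I) x^(T|I)],
   I ranging over the subsets of leaves of [T]; so the coefficient of [x^U] in
   [(x + c)^T] is [(T/U) c^(deg T - deg U)].  A contraction [(T|I)|J] of a
   contraction is a contraction [T|I'] with [I' ⊆ I], and each such [I'] arises
   from exactly one [J].  The subset binomial theorem therefore gives
     [\sum_U (T/U) c^(deg T - deg U) (U/W) d^(deg U - deg W) = (T/W) (c + d)^(deg T - deg W)],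
   i.e. these coefficient matrices on [P_n] form a one-parameter group, which
   is the identity at [c = 0].  The matrix of the [(x - a)^T] in the basis
   [x^U] is the one at [c = -a], and its inverse, the one at [c = a], yields
   the stated coefficients. *)

From HB Require Import structures.
From mathcomp Require Import all_boot all_algebra.
From mathcomp Require Import ring.

Set Implicit Arguments.
Unset Strict Implicit.
Unset Printing Implicit Defensive.
Import GRing.Theory.
Local Open Scope ring_scope.

Lemma sum_partition_seq (R : nmodType) (I J : eqType) (r : seq I) (s : seq J)
    (f : I -> J) (h : I -> R) :
  uniq s -> {in r, forall i, f i \in s} ->
  \sum_(j <- s) \sum_(i <- r | f i == j) h i = \sum_(i <- r) h i.
Proof.
move=> uniq_s f_in; rewrite (exchange_big_dep predT) //=.
apply: eq_big_seq => i ri; rewrite -big_filter.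
have -> : [seq j <- s | f i == j] = [:: f i].
  by rewrite -(filter_pred1_uniq uniq_s (f_in i ri)); apply: eq_filter => j; rewrite eq_sym.
by rewrite big_seq1.
Qed.

Lemma sum_delta_seq (R : pzSemiRingType) (I : eqType) (s : seq I) (f : I -> R) i :
  uniq s -> i \in s -> \sum_(j <- s) f j * (j == i)%:R = f i.
Proof.
move=> uniq_s si; rewrite (bigD1_seq i) //= eqxx mulr1 big1 ?addr0 // => j /negPf->.
exact: mulr0.
Qed.

Lemma ptree_ind_mem (P : ptree -> Prop) :
  (forall ts, {in ts, forall t, P t} -> P (PNode ts)) -> forall t, P t.
Proof.
move=> IHnode; fix IH 1 => -[ts]; apply: IHnode.
elim: ts => [t|u us IHus t]; first by rewrite in_nil => ?; exfalso.
by rewrite inE => /predU1P[-> | /IHus]; [exact: IH|].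
Qed.

Lemma nleaves_node ts : ts != [::] -> nleaves (PNode ts) = sumn (map nleaves ts).
Proof. by case: ts. Qed.

Lemma nleaves_gt0 t : (0 < nleaves t)%N.
Proof.
elim/ptree_ind_mem: t => -[//|u us] IH.
by rewrite nleaves_node //= ltn_addr ?IH ?mem_head.
Qed.

(* The local [go] of [restr]. *)
Fixpoint restrs (ts : seq ptree) (m : bitseq) : seq ptr * bitseq :=
  if ts is u :: us then
    let: (r, m1) := restr u m in
    let: (rs, m2) := restrs us m1 in (r :: rs, m2)
  else ([::], m).

Lemma restr_node ts m : ts != [::] ->
  restr (PNode ts) m = let: (rs, m') := restrs ts m in (graft rs, m').
Proof. by case: ts. Qed.

Definition tcontract (t : ptree) (m : bitseq) : ptr := (restr t m).1.

Definition fcontract (ts : seq ptree) (m : bitseq) : seq ptr := (restrs ts m).1.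

Lemma tcontract_node ts m : ts != [::] -> tcontract (PNode ts) m = graft (fcontract ts m).
Proof. by move=> nts; rewrite /tcontract /fcontract restr_node //; case: restrs. Qed.

Lemma fcontract_consE u us m :
  fcontract (u :: us) m = tcontract u m :: fcontract us (restr u m).2.
Proof. by rewrite /fcontract /tcontract /=; case: restr => r m1 /=; case: restrs. Qed.

Lemma restr_cat t m1 m2 : size m1 = nleaves t -> restr t (m1 ++ m2) = (tcontract t m1, m2).
Proof.
rewrite /tcontract; elim/ptree_ind_mem: t m1 m2 => -[|u us] IH m1 m2.
  by case: m1 => [|b [|]].
rewrite nleaves_node // !restr_node //.
suff restrs_cat : forall m1 m2, size m1 = sumn (map nleaves (u :: us)) ->
    restrs (u :: us) (m1 ++ m2) = ((restrs (u :: us) m1).1, m2).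
  by move=> sz; rewrite restrs_cat // -[m1 in RHS]cats0 restrs_cat //; case: restrs.
elim: (u :: us) IH => [|v vs IHvs] IH {}m1 {}m2 sz; first by case: m1 sz.
rewrite -(cat_take_drop (nleaves v) m1) -catA /=.
have szv : size (take (nleaves v) m1) = nleaves v by rewrite size_takel // sz leq_addr.
rewrite !IH ?mem_head // IHvs ?cats0 ?size_drop ?sz /= ?addKn //.
- by case: restrs.
- by move=> t tin; apply: IH; rewrite inE tin orbT.
Qed.

Lemma fcontract_cons u us m1 m2 : size m1 = nleaves u ->
  fcontract (u :: us) (m1 ++ m2) = tcontract u m1 :: fcontract us m2.
Proof. by move=> sz; rewrite fcontract_consE {1}/tcontract restr_cat. Qed.

Lemma fcontract_split u us m : size m = (nleaves u + sumn (map nleaves us))%N ->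
  fcontract (u :: us) m =
  tcontract u (take (nleaves u) m) :: fcontract us (drop (nleaves u) m).
Proof.
move=> sz; rewrite -{1}(cat_take_drop (nleaves u) m) fcontract_cons //.
by rewrite size_takel // sz leq_addr.
Qed.

Lemma pmap_id_Some (ts : seq ptree) : pmap id (map Some ts) = ts.
Proof. by elim: ts => //= t ts ->. Qed.

Lemma sumn_pdeg rs : sumn (map pdeg rs) = sumn (map nleaves (pmap id rs)).
Proof. by elim: rs => [|[r|] rs IH] //=; rewrite IH. Qed.

Lemma pdeg_graft rs : pdeg (graft rs) = sumn (map pdeg rs).
Proof.
by rewrite sumn_pdeg /graft; case: (pmap id rs) => [|t [|t' ts]] //=; rewrite addn0.
Qed.

Lemma preduced_graft rs : all preduced rs -> preduced (graft rs).
Proof.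
have -> : all preduced rs = all reduced (pmap id rs) by elim: rs => [|[r|] rs /= ->].
by rewrite /graft; case: (pmap id rs) => [|t [|t' ts]] //=; rewrite andbT.
Qed.

Lemma pdeg_tcontract t m : size m = nleaves t -> pdeg (tcontract t m) = count id m.
Proof.
elim/ptree_ind_mem: t m => -[|u us] IH m; first by case: m => [|[] [|]].
rewrite nleaves_node // tcontract_node // pdeg_graft.
elim: (u :: us) IH m => [|v vs IHvs] IH m; first by case: m.
move=> sz; rewrite fcontract_split //= IH ?mem_head ?size_takel ?sz ?leq_addr //.
rewrite IHvs ?size_drop ?sz ?addKn //; first by rewrite -count_cat cat_take_drop.
by move=> t tin; apply: IH; rewrite inE tin orbT.
Qed.

Lemma pdeg_fcontract ts m :
  size m = sumn (map nleaves ts) -> sumn (map pdeg (fcontract ts m)) = count id m.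
Proof.
elim: ts m => [|u us IH] m; first by case: m.
move=> sz; rewrite fcontract_split //= pdeg_tcontract ?size_takel ?sz ?leq_addr //.
by rewrite IH ?size_drop ?sz ?addKn // -count_cat cat_take_drop.
Qed.

Lemma preduced_tcontract t m : preduced (tcontract t m).
Proof.
elim/ptree_ind_mem: t m => -[|u us] IH m; first by case: m => [|[] ?].
rewrite tcontract_node //; apply: preduced_graft.
elim: (u :: us) IH m => [//|v vs IHvs] IH m.
rewrite fcontract_consE /= IH ?mem_head // IHvs // => t tin.
by apply: IH; rewrite inE tin orbT.
Qed.

Lemma tcontract_full t : reduced t -> tcontract t (nseq (nleaves t) true) = Some t.
Proof.
elim/ptree_ind_mem: t => -[//|u us] IH /andP[size_ne1 red_ts].
rewrite tcontract_node // nleaves_node //.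
have -> : fcontract (u :: us) (nseq (sumn (map nleaves (u :: us))) true) = map Some (u :: us).
  elim: (u :: us) IH red_ts => [//|v vs IHvs] IH /andP[rv rvs].
  rewrite /= nseqD fcontract_cons ?size_nseq // IH ?mem_head // IHvs // => t tin.
  by apply: IH; rewrite inE tin orbT.
by rewrite /graft pmap_id_Some; case: us size_ne1 {IH red_ts}.
Qed.

Lemma pdeg_contract T m : size m = pdeg T -> pdeg (contract T m) = count id m.
Proof. by case: T => [t /pdeg_tcontract|] //; case: m. Qed.

Lemma preduced_contract T m : preduced (contract T m).
Proof. by case: T => [t|] //; apply: preduced_tcontract. Qed.

Lemma contract_full T : preduced T -> contract T (nseq (pdeg T) true) = T.
Proof. by case: T => [t /tcontract_full|]. Qed.

Fixpoint bitseqs (k : nat) : seq bitseq :=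
  if k is k'.+1 then map (cons true) (bitseqs k') ++ map (cons false) (bitseqs k')
  else [:: [::]].

Lemma mem_map_cons (T : eqType) (x y : T) s ss :
  (x :: s \in map (cons y) ss) = (x == y) && (s \in ss).
Proof. by apply/mapP/andP => [[s' s'ss [-> ->]] | [/eqP-> sss]]; [|exists s]. Qed.

Lemma mem_bitseqs k m : (m \in bitseqs k) = (size m == k).
Proof.
elim: k m => [|k IH] [|b m] //=; rewrite mem_cat.
  by apply/negP => /orP[] /mapP[].
rewrite !(@mem_map_cons bool) IH eqSS.
by case: b; rewrite /= ?orbF.
Qed.

Lemma uniq_bitseqs k : uniq (bitseqs k).
Proof.
have cons_inj (b : bool) : injective (cons b) by move=> m m' [].
elim: k => //= k IH; rewrite cat_uniq !(map_inj_uniq (cons_inj _)) IH andbT /=.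
by apply/hasP => -[_ /mapP[m _ ->]]; rewrite (@mem_map_cons bool).
Qed.

Lemma size_bitseqs k m : m \in bitseqs k -> size m = k.
Proof. by rewrite mem_bitseqs => /eqP. Qed.

Lemma bitseqsD k1 k2 :
  bitseqs (k1 + k2) = [seq m1 ++ m2 | m1 <- bitseqs k1, m2 <- bitseqs k2].
Proof.
elim: k1 => [|k1 IH] /=; first by rewrite cats0 map_id.
rewrite (allpairs_cat _ _ _ (fun _ => bitseqs k2)).
rewrite !(allpairs_mapl _ _ _ (fun _ => bitseqs k2)) IH.
by rewrite !(map_allpairs _ _ _ (fun _ => bitseqs k2)).
Qed.

Lemma pbinom_sum S T : pbinom S T = (\sum_(m <- bitseqs (pdeg S) | contract S m == T) 1)%N.
Proof.
have perm_tuples k : perm_eq (map val (index_enum {: k.-tuple bool})) (bitseqs k).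
  apply: uniq_perm; first by rewrite map_inj_uniq ?index_enum_uniq //; exact: val_inj.
    exact: uniq_bitseqs.
  move=> m; rewrite mem_bitseqs; apply/mapP/idP => [[t _ ->]|sz]; first by rewrite size_tuple.
  by exists (Tuple sz); rewrite ?mem_index_enum.
rewrite /pbinom -sum1_card -(perm_big _ (perm_tuples _)) big_map.
by rewrite [in RHS]big_mkcond [in LHS]big_mkcond.
Qed.

Lemma count_le_implb J m : all2 implb J m -> (count id J <= count id m)%N.
Proof.
elim: J m => [|b J IH] [|b' m] //= /andP[bb' /IH le_Jm].
by case: b b' bb' => [] [] //= _; rewrite ?ltnS // ltnW.
Qed.

Lemma count_id_eq_size m : (count id m == size m) = (m == nseq (size m) true).
Proof.
elim: m => //= b m IH; case: b => /=; first by rewrite eqSS IH eqseq_cons.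
by rewrite eqseq_cons andFb add0n ltn_eqF // ltnS count_size.
Qed.

(* [comp_mask m k] selects, among the positions set in [m], those whose rank
   is set in [k]: it is the composite of the selections [m] and then [k]. *)
Fixpoint comp_mask (m k : bitseq) : bitseq :=
  if m is b :: m' then
    if b then head false k :: comp_mask m' (behead k) else false :: comp_mask m' k
  else [::].

Lemma size_comp_mask m k : size (comp_mask m k) = size m.
Proof. by elim: m k => [|[] m IH] k //=; rewrite IH. Qed.

Lemma count_comp_mask m k : size k = count id m -> count id (comp_mask m k) = count id k.
Proof.
elim: m k => [|[] m IH] [|b k] //= sz; rewrite IH //.
by case: sz.
Qed.

Lemma comp_mask_cat m1 m2 k :
  comp_mask (m1 ++ m2) k =
  comp_mask m1 (take (count id m1) k) ++ comp_mask m2 (drop (count id m1) k).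
Proof. by elim: m1 k => [|[] m1 IH] [|b k] //=; rewrite IH. Qed.

Lemma sum_comp_mask (R : nmodType) m (g : bitseq -> R) :
  \sum_(k <- bitseqs (count id m)) g (comp_mask m k) =
  \sum_(J <- bitseqs (size m) | all2 implb J m) g J.
Proof.
elim: m g => [|b m IH] g; first by rewrite /= !big_cons !big_nil.
case: b; rewrite /= big_cat !big_map /= ?add0n.
  by rewrite big_cat !big_map -!IH.
by rewrite big_pred0_eq add0r -IH.
Qed.

Lemma sum_supmask (R : comNzRingType) (c d : R) J :
  \sum_(m <- bitseqs (size J) | all2 implb J m)
     c ^+ (size m - count id m) * d ^+ (count id m - count id J) =
  (c + d) ^+ (size J - count id J).
Proof.
elim: J => [|b J IH]; first by rewrite /= big_cons big_nil /= mulr1 addr0.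
rewrite /= big_cat !big_map /=; case: b => /=.
  by rewrite big_pred0_eq addr0 !add1n !subSS.
rewrite !add0n subSn ?count_size // exprS -IH mulr_sumr -big_split /=.
rewrite big_seq_cond [RHS]big_seq_cond; apply: eq_bigr => m /andP[/size_bitseqs szm le_Jm].
rewrite add1n subSS subSn ?subSn ?count_le_implb // -?szm ?count_size // !exprS.
ring.
Qed.

Fixpoint contracts (rs : seq ptr) (k : bitseq) : seq ptr :=
  if rs is r :: rs' then contract r (take (pdeg r) k) :: contracts rs' (drop (pdeg r) k)
  else [::].

Lemma pmap_contracts rs k :
  pmap id (contracts rs k) = pmap id (contracts (map Some (pmap id rs)) k).
Proof. by elim: rs k => [|[r|] rs IH] k //=; rewrite ?drop0 IH. Qed.

Lemma contracts_Some ts k :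
  size k = sumn (map nleaves ts) -> contracts (map Some ts) k = fcontract ts k.
Proof.
elim: ts k => [|u us IH] k; first by case: k.
by move=> sz; rewrite fcontract_split //= IH // size_drop sz addKn.
Qed.

Lemma graft_pmap rs : graft rs = graft (map Some (pmap id rs)).
Proof. by rewrite /graft pmap_id_Some. Qed.

Lemma contract_graft rs k :
  size k = sumn (map pdeg rs) -> contract (graft rs) k = graft (contracts rs k).
Proof.
rewrite sumn_pdeg => sz.
rewrite (graft_pmap rs) [in RHS]graft_pmap pmap_contracts -[in RHS]graft_pmap.
move: (pmap id rs) sz => [|u [|v vs]] sz //.
  by rewrite /= addn0 in sz; rewrite /= take_oversize ?sz //; case: (restr u k).1.
by rewrite contracts_Some // -tcontract_node // /graft pmap_id_Some.
Qed.

Lemma tcontract_comp t m k : size m = nleaves t -> size k = count id m ->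
  contract (tcontract t m) k = tcontract t (comp_mask m k).
Proof.
elim/ptree_ind_mem: t m k => -[|u us] IH m k.
  by case: m => [|[] [|]] //; case: k => [|[] [|]].
rewrite nleaves_node // !tcontract_node // => szm szk.
rewrite contract_graft ?pdeg_fcontract //; congr graft.
move: m k szm szk; elim: (u :: us) IH => [|v vs IHvs] IH m k szm szk; first by case: m szm szk.
have szv : size (take (nleaves v) m) = nleaves v by rewrite size_takel // szm leq_addr.
have szd : size (drop (nleaves v) m) = sumn (map nleaves vs) by rewrite size_drop szm addKn.
have countm : count id m = (count id (take (nleaves v) m) + count id (drop (nleaves v) m))%N.
  by rewrite -count_cat cat_take_drop.
rewrite fcontract_split // /= pdeg_tcontract //.
rewrite -[m in comp_mask m k](cat_take_drop (nleaves v) m) comp_mask_cat.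
rewrite fcontract_cons ?size_comp_mask // IH ?mem_head //; last first.
  by rewrite size_takel // szk countm leq_addr.
rewrite IHvs //; last by rewrite size_drop szk countm addKn.
by move=> t tin; apply: IH; rewrite inE tin orbT.
Qed.

Lemma contract_comp T m k : size m = pdeg T -> size k = count id m ->
  contract (contract T m) k = contract T (comp_mask m k).
Proof. by case: T => [t|] /=; [exact: tcontract_comp | case: m => // _; case: k]. Qed.

Section ShiftCoefficients.
Variable F : comNzRingType.
Implicit Types (a c : F) (f y : ppoly F).

Lemma pcoef_pscale c f U : pcoef (pscale c f) U = c * pcoef f U.
Proof. by rewrite /pcoef /pscale big_map mulr_sumr. Qed.

Lemma pcoef_lincomb s (c : ptr -> F) y U :
  pcoef (lincomb s c y) U = \sum_(T <- s) c T * pcoef (ppow y T) U.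
Proof.
elim: s => [|T s IH]; first by rewrite /pcoef !big_nil.
by rewrite big_cons -IH -pcoef_pscale /lincomb /pcoef /= big_cat.
Qed.

Lemma tpow_pxa a t : tpow (pxa a) t =
  [seq ((- a) ^+ count negb m, tcontract t m) | m <- bitseqs (nleaves t)].
Proof.
elim/ptree_ind_mem: t => -[//|u us] IH.
have combs_tpow : combs (map (tpow (pxa a)) (u :: us)) =
    [seq ((- a) ^+ count negb m, fcontract (u :: us) m)
    | m <- bitseqs (sumn (map nleaves (u :: us)))].
  elim: (u :: us) IH => [//|v vs IHvs] IH /=.
  rewrite IH ?mem_head // IHvs; last by move=> t tin; apply: IH; rewrite inE tin orbT.
  rewrite bitseqsD (map_allpairs _ _ _ (fun _ => bitseqs _)).
  rewrite (allpairs_mapl _ _ _ (fun _ => _)) (allpairs_mapr _ _ _ (fun _ => _)) /=.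
  apply/eq_in_allpairs => m1 m2 /size_bitseqs sz _ /=.
  by rewrite count_cat exprD fcontract_cons.
have -> : tpow (pxa a) (PNode (u :: us)) = pomega (map (tpow (pxa a)) (u :: us)) by [].
rewrite /pomega combs_tpow -map_comp nleaves_node //.
by apply: eq_map => m /=; rewrite tcontract_node.
Qed.

Lemma ppow_pxa a T : ppow (pxa a) T =
  [seq ((- a) ^+ count negb m, contract T m) | m <- bitseqs (pdeg T)].
Proof. by case: T => [t|] //=; rewrite tpow_pxa. Qed.

(* [pshift c V T] is the coefficient of [x^T] in [(x + c)^V]. *)
Definition pshift c (V T : ptr) : F := (pbinom V T)%:R * c ^+ (pdeg V - pdeg T).

Lemma pshiftE c V T :
  pshift c V T = \sum_(m <- bitseqs (pdeg V) | contract V m == T) c ^+ (pdeg V - count id m).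
Proof.
rewrite /pshift pbinom_sum natr_sum mulr_suml big_seq_cond [RHS]big_seq_cond.
by apply: eq_bigr => m /andP[/size_bitseqs sz /eqP <-]; rewrite mul1r pdeg_contract.
Qed.

Lemma pcoef_ppow_pxa a T U : pcoef (ppow (pxa a) T) U = pshift (- a) T U.
Proof.
rewrite ppow_pxa /pcoef big_map pshiftE big_seq_cond [RHS]big_seq_cond.
apply: eq_bigr => m /andP[/size_bitseqs sz _].
by rewrite -sz -(count_predC id m) addKn.
Qed.

Lemma pcoef_lincomb_pxa s (c : ptr -> F) a U :
  pcoef (lincomb s c (pxa a)) U = \sum_(T <- s) c T * pshift (- a) T U.
Proof. by rewrite pcoef_lincomb; under eq_bigr do rewrite pcoef_ppow_pxa. Qed.

Lemma pshift_contract d V m W : size m = pdeg V ->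
  pshift d (contract V m) W =
  \sum_(J <- bitseqs (pdeg V) | all2 implb J m)
     (contract V J == W)%:R * d ^+ (count id m - count id J).
Proof.
move=> szm; rewrite pshiftE pdeg_contract // -szm -sum_comp_mask big_mkcond.
apply: eq_big_seq => k /size_bitseqs szk.
by rewrite contract_comp // count_comp_mask //; case: eqP; rewrite ?mul1r ?mul0r.
Qed.

Lemma pshift0 V W : preduced V -> pshift (0 : F) V W = (V == W)%:R.
Proof.
move=> redV; rewrite pshiftE big_mkcond.
rewrite (bigD1_seq (nseq (pdeg V) true)) ?uniq_bitseqs ?mem_bitseqs ?size_nseq //=.
rewrite contract_full // count_nseq mul1n subnn expr0 big1_seq ?addr0; first by case: eqP.
move=> m /andP[neq_m /size_bitseqs szm]; case: eqP => // _.
have lt_m : (count id m < pdeg V)%N.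
  by rewrite -szm ltn_neqAle count_size andbT count_id_eq_size szm.
by rewrite expr0n subn_eq0 leqNgt lt_m.
Qed.

End ShiftCoefficients.

Section ShiftComposition.
Variables (F : comNzRingType) (n : nat) (s : seq ptr).
Hypotheses (uniq_s : uniq s) (mem_s : forall T, (T \in s) = Pn n T).

Lemma contract_mem V m : Pn n V -> size m = pdeg V -> contract V m \in s.
Proof.
rewrite mem_s /Pn preduced_contract => /andP[_ le_Vn] sz /=.
by rewrite pdeg_contract // (leq_trans _ le_Vn) // -sz count_size.
Qed.

Lemma pshift_mul (c d : F) V W : Pn n V ->
  \sum_(T <- s) pshift c V T * pshift d T W = pshift (c + d) V W.
Proof.
move=> PV.
have -> : \sum_(T <- s) pshift c V T * pshift d T W =
    \sum_(m <- bitseqs (pdeg V)) c ^+ (pdeg V - count id m) * pshift d (contract V m) W.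
  rewrite -(sum_partition_seq (f := contract V) _ uniq_s); last first.
    by move=> m /size_bitseqs; apply: contract_mem.
  apply: eq_bigr => T _; rewrite pshiftE mulr_suml.
  by apply: eq_bigr => m /eqP->.
under eq_big_seq => m /size_bitseqs szm do rewrite pshift_contract // mulr_sumr.
rewrite (exchange_big_dep predT) //= pshiftE [RHS]big_mkcond big_seq [RHS]big_seq.
apply: eq_bigr => J /size_bitseqs szJ.
case: eqP => _; last by rewrite big1 // => m _; rewrite mul0r mulr0.
rewrite -szJ -sum_supmask big_seq_cond [RHS]big_seq_cond.
by apply: eq_bigr => m /andP[/size_bitseqs szm _]; rewrite mul1r szm.
Qed.

Lemma pshift_eq0 c T U : Pn n T -> U \notin s -> pshift c T U = 0 :> F.
Proof.
move=> PT Us; rewrite pshiftE big1_seq // => m /andP[/eqP cTm /size_bitseqs szm].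
by case/negP: Us; rewrite -cTm contract_mem // -mem_s.
Qed.

Lemma sum_pshiftK c (f : ptr -> F) T0 : T0 \in s ->
  \sum_(U <- s) (\sum_(T <- s) f T * pshift c T U) * pshift (- c) U T0 = f T0.
Proof.
move=> T0s; under eq_bigr do rewrite mulr_suml.
rewrite exchange_big /= -[RHS](sum_delta_seq f uniq_s T0s) big_seq [RHS]big_seq.
apply: eq_bigr => T Ts; under eq_bigr do rewrite -mulrA.
rewrite -mulr_sumr pshift_mul -?mem_s // subrr pshift0 //.
by move: Ts; rewrite mem_s => /andP[].
Qed.

End ShiftComposition.

Lemma size_le_sumn_nleaves ts : (size ts <= sumn (map nleaves ts))%N.
Proof. by elim: ts => //= t ts IH; rewrite -add1n leq_add ?nleaves_gt0. Qed.

Lemma nleaves_lt_sumn ts t :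
  t \in ts -> (1 < size ts)%N -> (nleaves t < sumn (map nleaves ts))%N.
Proof.
move=> tin; have perm_ts := perm_to_rem tin.
rewrite (perm_size perm_ts) (perm_sumn (perm_map nleaves perm_ts)) /= ltnS.
case: (rem t ts) => //= u us _.
by rewrite -[X in (X < _)%N]addn0 ltn_add2l ltn_addr ?nleaves_gt0.
Qed.

Fixpoint seqs_upto (b : nat) (s : seq ptree) : seq (seq ptree) :=
  if b is b'.+1 then [::] :: [seq x :: l | x <- s, l <- seqs_upto b' s] else [:: [::]].

Lemma mem_seqs_upto b s l : (size l <= b)%N -> all (mem s) l -> l \in seqs_upto b s.
Proof.
elim: b l => [|b IH] [|x l] //= sz /andP[xs ls].
by rewrite inE allpairs_f ?orbT ?IH.
Qed.

Fixpoint trees_upto (k : nat) : seq ptree :=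
  if k is k'.+1 then pleaf :: [seq PNode l | l <- seqs_upto k (trees_upto k')] else [::].

Lemma mem_trees_upto k t : reduced t -> (nleaves t <= k)%N -> t \in trees_upto k.
Proof.
elim: k t => [|k IH] t red_t le_tk; first by move: (nleaves_gt0 t); rewrite leqNgt ltnS le_tk.
case: t red_t le_tk => -[//|u us] /andP[size_ne1 red_ts]; rewrite nleaves_node // => le_tk.
have size_gt1 : (1 < size (u :: us))%N by rewrite ltn_neqAle eq_sym size_ne1.
rewrite inE map_f ?orbT // mem_seqs_upto ?(leq_trans (size_le_sumn_nleaves _)) //.
apply/allP => t tin; apply: IH; first by move/allP: red_ts; apply.
by rewrite -ltnS (leq_trans (nleaves_lt_sumn tin size_gt1)).
Qed.

Lemma enum_Pn n : exists s : seq ptr, uniq s /\ forall T, (T \in s) = Pn n T.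
Proof.
exists (undup [seq T <- None :: map Some (trees_upto n) | Pn n T]).
split; first exact: undup_uniq.
move=> T; rewrite mem_undup mem_filter; apply/andP/idP => [[] // | PT]; split => //.
case: T PT => [t /andP[red_t le_tn]|_]; last exact: mem_head.
by rewrite inE (mem_map (@Some_inj _)) mem_trees_upto.
Qed.

Theorem proposition2p1 (F : fieldType) (a : F) (n : nat) :
  (exists s : seq ptr, uniq s /\ forall T, (T \in s) = Pn n T) /\
  forall s : seq ptr, uniq s -> (forall T, (T \in s) = Pn n T) ->
  [/\ (* each (x-a)^T, T in P_n, lies in C{x}_{<= n} *)
      forall T, T \in s -> in_le n (ppow (pxa a) T),
      (* linear independence *)
      forall c : ptr -> F,
        (forall U, pcoef (lincomb s c (pxa a)) U = 0) ->
        forall T, T \in s -> c T = 0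
    & (* spanning, with the explicit coefficients *)
      forall f : ppoly F, in_le n f ->
        forall U, pcoef f U =
          pcoef (lincomb s
                   (fun T => \sum_(V <- s)
                       pcoef f V * (pbinom V T)%:R * a ^+ (pdeg V - pdeg T))
                   (pxa a)) U].
Proof.
split; first exact: enum_Pn.
move=> s uniq_s mem_s; split.
- move=> T Ts U PnU; rewrite pcoef_ppow_pxa (pshift_eq0 mem_s) -?mem_s //.
  by rewrite mem_s.
- move=> c lin0 T Ts; rewrite -(sum_pshiftK uniq_s mem_s (- a) c Ts) opprK big1 // => U _.
  by rewrite -pcoef_lincomb_pxa lin0 mul0r.
- move=> f f_le U; rewrite pcoef_lincomb_pxa.
  under eq_bigr do under eq_bigr do rewrite -mulrA -/(pshift a _ _).
  have [Us | Us] := boolP (U \in s); first by rewrite (sum_pshiftK uniq_s mem_s).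
  rewrite f_le -?mem_s // big1_seq // => T /andP[_ Ts].
  by rewrite (pshift_eq0 mem_s) ?mulr0 // -mem_s.
Qed.
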